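(* Let $D_N=\sum_{k=0}^{N}\binom{N}{k}^2 2^k$ denote the $N$-th central Delannoy number. For every non-negative integer $n$, $$v_3(D_{2n+1})=1+v_3(2n+1)+v_3\Big(\binom{2n}{n}\Big),\qquad v_3(D_{2n})=v_3\Big(\binom{2n}{n}\Big).$$
   Context: $v_3(y)$ denotes the $3$-adic valuation of a nonzero integer $y$. Equivalently, $D_N$ is the number of lattice paths from $(0,0)$ to $(N,N)$ using steps $(1,0)$, $(0,1)$, $(1,1)$. *)

From mathcomp Require Import all_boot.
Set Implicit Arguments. Unset Strict Implicit. Unset Printing Implicit Defensive.

Definition delannoy (N : nat) : nat := \sum_(0 <= k < N.+1) 'C(N, k) ^ 2 * 2 ^ k.

Definition v3 (y : nat) : nat := logn 3 y.

From mathcomp Require Import all_boot all_algebra ring zify.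
Set Implicit Arguments. Unset Strict Implicit. Unset Printing Implicit Defensive.
Import GRing.Theory.

(* Since (1 + x)(2 + x) = (2 + x^2) + 3x, the coefficient D_N of x^N in
   ((1 + x)(2 + x))^N is the sum over i of C(N, i) 3^i c_(N-i), where c_m, the
   coefficient of x^m in (2 + x^2)^m, is 2^(m/2) C(m, m/2) for even m and 0 for
   odd m.  The leading term is 2^n C(2n, n) for N = 2n and 3 (2n+1) 2^n C(2n, n)
   for N = 2n+1.  Every other nonzero term has i = 2m or i = 2m + 1 with m > 0,
   and the identity C(2n, 2m) C(2n-2m, n-m) C(2m, m) = C(2n, n) C(n, m)^2 shows
   that its 3-adic valuation exceeds that of the leading term by at least
   2m - v_3((2m+1) C(2m, m)), which is positive because (2m+1) C(2m, m) < 9^m. *)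

Lemma logn_addr_dvd p a b : prime p -> 0 < a -> p ^ (logn p a).+1 %| b ->
  logn p (a + b) = logn p a.
Proof.
move=> p_pr a_gt0 dvd_b; have ab_gt0 : 0 < a + b by rewrite ltn_addr.
apply/eqP; rewrite eqn_leq -(pfactor_dvdn _ p_pr ab_gt0) dvdn_add ?pfactor_dvdnn //.
  by rewrite leqNgt -(pfactor_dvdn _ p_pr ab_gt0) (dvdn_addl _ dvd_b) pfactor_dvdn ?ltnn.
exact: dvdn_trans (dvdn_exp2l p (leqnSn _)) dvd_b.
Qed.

Lemma logn_lt_exp p x k : 1 < p -> 0 < x -> x < p ^ k -> logn p x < k.
Proof.
move=> p_gt1 x_gt0 lt_x; rewrite -(ltn_exp2l _ _ p_gt1); apply: leq_ltn_trans lt_x.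
exact: dvdn_leq x_gt0 (pfactor_dvdnn p x).
Qed.

Lemma logn3_mul2X k x : logn 3 (2 ^ k * x) = logn 3 x.
Proof. exact/logn_Gauss/coprimeXr. Qed.

Lemma mul_bin_double_succ m :
  m.+1 * 'C(m.+1.*2, m.+1) = 2 * (m.*2.+1 * 'C(m.*2, m)).
Proof.
have sym_mid : 'C(m.*2.+1, m.+1) = 'C(m.*2.+1, m).
  by rewrite -bin_sub; [congr 'C(_, _); lia | lia].
by rewrite -(mul_bin_diag m.*2.+2) (mul_bin_diag m.*2.+1) sym_mid mulnA mul2n.
Qed.

Lemma odd_central_bin_lt m : 0 < m -> m.*2.+1 * 'C(m.*2, m) < 9 ^ m.
Proof.
elim: m => [//|[|m] IH _] //.
have := IH isT; have := mul_bin_double_succ m.+1.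
set b := m.+1.*2.+1 * _ => rec lt_b.
rewrite -(ltn_pmul2l (ltn0Sn m.+1)) mulnCA rec expnS.
have t_gt0 : 0 < 9 ^ m.+1 by rewrite expn_gt0.
move: lt_b t_gt0; rewrite !doubleS; nia.
Qed.

Lemma logn3_odd_central_lt m : 0 < m -> logn 3 m.*2.+1 + logn 3 'C(m.*2, m) < m.*2.
Proof.
move=> m_gt0; have central_gt0 : 0 < 'C(m.*2, m) by rewrite bin_gt0 -addnn leq_addr.
rewrite -lognM // logn_lt_exp ?muln_gt0 ?central_gt0 //.
have -> : 3 ^ m.*2 = 9 ^ m by rewrite -mul2n expnM.
exact: odd_central_bin_lt.
Qed.

Lemma bin_double_mul n m : m <= n ->
  'C(n.*2, m.*2) * 'C((n - m).*2, n - m) * 'C(m.*2, m) = 'C(n.*2, n) * 'C(n, m) ^ 2.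
Proof.
move=> le_mn; have double_subK k : k.*2 - k = k by rewrite -addnn addnK.
have fact_nm := bin_fact le_mn.
have fact_n := bin_fact (leq_addl n n); rewrite addnn double_subK in fact_n.
have fact_m := bin_fact (leq_addl m m); rewrite addnn double_subK in fact_m.
have fact_nm2 := bin_fact (leq_addl (n - m) (n - m)); rewrite addnn double_subK in fact_nm2.
have fact_2nm := bin_fact (etrans (leq_double m n) le_mn); rewrite -doubleB in fact_2nm.
apply/eqP; rewrite -(eqn_pmul2r (_ : 0 < (m`! * (n - m)`!) ^ 2)); last first.
  by rewrite expn_gt0 muln_gt0 !fact_gt0.
apply/eqP; transitivity (n.*2)`!; last by rewrite -fact_n -fact_nm; ring.
by rewrite -fact_2nm -fact_m -fact_nm2; ring.
Qed.

Definition mid_coef (m : nat) : nat := if odd m then 0 else 2 ^ m./2 * 'C(m, m./2).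

Lemma mid_coef_odd m : odd m -> mid_coef m = 0.
Proof. by rewrite /mid_coef => ->. Qed.

Lemma mid_coef_double m : mid_coef m.*2 = 2 ^ m * 'C(m.*2, m).
Proof. by rewrite /mid_coef odd_double half_double. Qed.

Definition delannoy_term (N i : nat) : nat := 'C(N, i) * 3 ^ i * mid_coef (N - i).

Section GeneratingFunction.
Local Open Scope ring_scope.

Lemma coef_addXn_exp (c k N i : nat) :
  ((c%:P + 'X^k) ^+ N : {poly nat})`_i =
    (\sum_(j < N.+1 | i == k * j) c ^ (N - j) * 'C(N, j))%N.
Proof.
rewrite exprDn coef_sum [RHS]big_mkcond /=; apply: eq_bigr => j _.
rewrite coefMn -polyC_exp -exprM coefCM coefXn !natrE.
by case: eqP => _; rewrite ?muln1 ?muln0 ?mul0rn // -mulr_natr natn.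
Qed.

Lemma coef_addX_exp (c N j : nat) : (j <= N)%N ->
  ((c%:P + 'X) ^+ N : {poly nat})`_j = (c ^ (N - j) * 'C(N, j))%N.
Proof.
move=> le_jN; rewrite -['X]expr1 coef_addXn_exp.
under eq_bigl => i do rewrite mul1n eq_sym.
by rewrite (big_ord1_eq _ (fun i => c ^ (N - i) * 'C(N, i))%N) ltnS le_jN.
Qed.

Lemma coef_2_addX2_exp (m : nat) :
  ((2%:P + 'X^2) ^+ m : {poly nat})`_m = mid_coef m.
Proof.
rewrite coef_addXn_exp -(odd_double_half m); move: (m./2) (odd m) => a [|]; rewrite ?add1n ?add0n.
  rewrite mid_coef_odd /=; last by rewrite odd_double.
  rewrite big_pred0 // => j.
  by apply/negbTE/negP => /eqP /(congr1 odd); rewrite mul2n /= !odd_double.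
under eq_bigl => j do rewrite mul2n (inj_eq double_inj) eq_sym.
rewrite (big_ord1_eq _ (fun j => 2 ^ (a.*2 - j) * 'C(a.*2, j))%N) ltnS.
by rewrite mid_coef_double -addnn addnK leq_addr.
Qed.

Lemma delannoy_coef (N : nat) :
  delannoy N = ((((1%:P + 'X) * (2%:P + 'X)) ^+ N : {poly nat})`_N).
Proof.
rewrite exprMn coefM /delannoy big_mkord; apply: eq_bigr => [[j /= lt_jN]] _.
rewrite !coef_addX_exp ?leq_subr // exp1n mul1n subKn // bin_sub //.
by rewrite natn; ring.
Qed.

Lemma delannoyE (N : nat) : delannoy N = (\sum_(0 <= i < N.+1) delannoy_term N i)%N.
Proof.
rewrite delannoy_coef big_mkord.
have -> : ((1%:P + 'X) * (2%:P + 'X) : {poly nat}) = (2%:P + 'X^2) + 3%:P * 'X.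
  by rewrite -[3%N]/(1 + 2)%N polyCD polyC1; ring.
rewrite exprDn coef_sum; apply: eq_bigr => i _.
rewrite coefMn exprMn -polyC_exp mulrA coefMXn ltnNge -ltnS ltn_ord /=.
by rewrite coefMC coef_2_addX2_exp -mulr_natr natn /delannoy_term; ring.
Qed.
End GeneratingFunction.

Lemma delannoy_term0 N : delannoy_term N 0 = mid_coef N.
Proof. by rewrite /delannoy_term bin0 subn0 !mul1n. Qed.

Lemma delannoy_term_gt0 N i : i <= N -> ~~ odd (N - i) -> 0 < delannoy_term N i.
Proof.
move=> le_iN even_Ni; rewrite /delannoy_term /mid_coef (negbTE even_Ni).
by rewrite !muln_gt0 !expn_gt0 !bin_gt0 le_iN leq_half_double; lia.
Qed.

Lemma delannoy_term_eq0 N i : odd (N - i) -> delannoy_term N i = 0.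
Proof. by move=> odd_Ni; rewrite /delannoy_term mid_coef_odd ?muln0. Qed.

Lemma delannoy_term_doubleE n m : m <= n ->
  delannoy_term n.*2 m.*2 * 'C(m.*2, m) =
    'C(n.*2, n) * 'C(n, m) ^ 2 * 3 ^ m.*2 * 2 ^ (n - m).
Proof.
move=> le_mn; rewrite /delannoy_term -doubleB mid_coef_double -(bin_double_mul le_mn).
ring.
Qed.

Lemma delannoy_term_oddE n m :
  m.*2.+1 * delannoy_term n.*2.+1 m.*2.+1 = 3 * n.*2.+1 * delannoy_term n.*2 m.*2.
Proof.
rewrite /delannoy_term subSS !mulnA -(mul_bin_diag n.*2.+1) expnS /=.
ring.
Qed.

Lemma logn3_delannoy_term_double n m : m <= n ->
  logn 3 'C(n.*2, n) + m.*2 <= logn 3 (delannoy_term n.*2 m.*2) + logn 3 'C(m.*2, m).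
Proof.
move=> le_mn; have := congr1 (logn 3) (delannoy_term_doubleE le_mn).
have : 0 < delannoy_term n.*2 m.*2.
  by rewrite delannoy_term_gt0 ?leq_double // -doubleB odd_double.
move: (delannoy_term _ _) => t t_gt0.
rewrite [_ * 2 ^ _]mulnC logn3_mul2X !lognM ?pfactorK ?muln_gt0 ?expn_gt0 ?bin_gt0 //.
all: lia.
Qed.

Lemma dvdn_delannoy_term_double n i : 0 < i <= n.*2 ->
  3 ^ (logn 3 'C(n.*2, n)).+1 %| delannoy_term n.*2 i.
Proof.
case/andP => i_gt0 le_i; have [odd_i | /negPf even_i] := boolP (odd i).
  by rewrite delannoy_term_eq0 ?dvdn0 // oddB // odd_double odd_i.
have [m def_i] : exists m, i = m.*2 by exists i./2; rewrite -[LHS]odd_double_half even_i.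
subst i; have [m_gt0 le_mn] : 0 < m /\ m <= n by lia.
rewrite pfactor_dvdn ?delannoy_term_gt0 ?leq_double -?doubleB ?odd_double //.
have := logn3_delannoy_term_double le_mn; have := logn3_odd_central_lt m_gt0; lia.
Qed.

Lemma dvdn_delannoy_term_odd n i : 1 < i <= n.*2.+1 ->
  3 ^ (1 + logn 3 n.*2.+1 + logn 3 'C(n.*2, n)).+1 %| delannoy_term n.*2.+1 i.
Proof.
case/andP => i_gt1 le_i; have [odd_i | /negPf even_i] := boolP (odd i); last first.
  by rewrite delannoy_term_eq0 ?dvdn0 // oddB //= odd_double even_i.
have [m def_i] : exists m, i = m.*2.+1 by exists i./2; rewrite -[LHS]odd_double_half odd_i.
subst i; have [m_gt0 le_mn] : 0 < m /\ m <= n by lia.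
have odd_gt0 : 0 < delannoy_term n.*2.+1 m.*2.+1.
  by rewrite delannoy_term_gt0 ?ltnS ?leq_double // subSS -doubleB odd_double.
have even_gt0 : 0 < delannoy_term n.*2 m.*2.
  by rewrite delannoy_term_gt0 ?leq_double // -doubleB odd_double.
rewrite pfactor_dvdn //.
have := congr1 (logn 3) (delannoy_term_oddE n m).
have := logn3_delannoy_term_double le_mn; have := logn3_odd_central_lt m_gt0.
move: (delannoy_term n.*2.+1 _) (delannoy_term n.*2 _) odd_gt0 even_gt0 => ? ? ? ?.
rewrite !lognM ?muln_gt0 //; have -> : logn 3 3 = 1 by []; lia.
Qed.

Lemma logn3_delannoy_term_double0 n :
  logn 3 (delannoy_term n.*2 0) = logn 3 'C(n.*2, n).
Proof. by rewrite delannoy_term0 mid_coef_double logn3_mul2X. Qed.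

Lemma logn3_delannoy_term_odd1 n :
  logn 3 (delannoy_term n.*2.+1 1) = 1 + logn 3 n.*2.+1 + logn 3 'C(n.*2, n).
Proof.
have := delannoy_term_oddE n 0; rewrite double0 mul1n => ->.
rewrite lognM ?delannoy_term_gt0 ?subn0 ?odd_double ?muln_gt0 //.
by rewrite logn3_delannoy_term_double0 lognM.
Qed.

Theorem theorem5 (n : nat) :
  v3 (delannoy n.*2.+1) = 1 + v3 n.*2.+1 + v3 'C(n.*2, n) /\
  v3 (delannoy n.*2) = v3 'C(n.*2, n).
Proof.
rewrite /v3 !delannoyE; split.
- rewrite big_ltn // delannoy_term_eq0 /= ?odd_double // add0n big_ltn //.
  rewrite logn_addr_dvd ?logn3_delannoy_term_odd1 //.
    by rewrite delannoy_term_gt0 // subn1 odd_double.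
  rewrite big_nat_cond.
  apply: dvdn_sum => i; rewrite andbT => range_i.
  by apply: dvdn_delannoy_term_odd; lia.
- rewrite big_ltn // logn_addr_dvd ?logn3_delannoy_term_double0 //.
    by rewrite delannoy_term_gt0 // subn0 odd_double.
  rewrite big_nat_cond.
  apply: dvdn_sum => i; rewrite andbT => range_i.
  by apply: dvdn_delannoy_term_double; lia.
Qed.
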